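(* There exists a constant $C>0$ such that for each $D>1$ there exist ReLU neural networks $\phi_{D,\epsilon}\in \mathcal{N\!N}_{L,13,1,1}$ with $L \leq C(\log(1/\epsilon))^2\left(\lceil \log D\rceil^2 + (\log(1/\epsilon))^2\right)$ as $\epsilon\to 0$, such that $\| 1/x - \phi_{D,\epsilon}(x)\|_{L^\infty((1,D))}\leq \epsilon$, and with weights bounded in absolute value by a constant independent of $D$ and $\epsilon$.
   Context: ReLU activation $\varrho(x)=\max\{x,0\}$. A deep neural network (DNN) is a map $\Phi=\mathcal{A}_L\circ\varrho\circ\mathcal{A}_{L-1}\circ\cdots\circ\varrho\circ\mathcal{A}_1$ with affine maps $\mathcal{A}_k(\mathbf{x})=\mathbf{W}_k\mathbf{x}+\mathbf{b}_k$, $\mathbf{W}_k\in\mathbb{R}^{\ell_k\times\ell_{k-1}}$, $\varrho$ applied componentwise; its depth is $L$ and its width is $\max\{\ell_1,\dots,\ell_L\}$. $\mathcal{N\!N}_{L,M,\ell_0,\ell_L}$ denotes the set of ReLU DNNs with input dimension $\ell_0$, output dimension $\ell_L$, depth at most $L$ and width at most $M$. *)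

From Stdlib Require Import Reals Lra List.
Import ListNotations.
Open Scope R_scope.

Definition relu (x : R) : R := Rmax x 0.

(** A layer = an affine map x |-> W x + b.  Matrices / vectors are stored as
    functions on indices; only the entries with indices below the layer's
    input/output widths are ever used. *)
Definition layer : Type := ((nat -> nat -> R) * (nat -> R))%type.

Definition affine (win : nat) (W : nat -> nat -> R) (b : nat -> R)
  (x : nat -> R) : nat -> R :=
  fun i => fold_right Rplus 0 (map (fun j => W i j * x j) (seq 0 win)) + b i.

(** Evaluation of A_L o rho o A_{L-1} o ... o rho o A_1 ; [ws] lists the
    widths l_0, l_1, ..., l_L. *)
Fixpoint eval_layers (ws : list nat) (ls : list layer) (x : nat -> R)
  : nat -> R :=
  match ls, ws with
  | [], _ => x
  | [(W, b)], win :: _ => affine win W b x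
  | (W, b) :: ls', win :: ws' =>
      eval_layers ws' ls' (fun i => relu (affine win W b x i))
  | _, [] => x
  end.

Record network : Type := mkNet {
  nn_widths : list nat;
  nn_layers : list layer
}.

Definition depth (N : network) : nat := length (nn_layers N).

Definition width (N : network) : nat := fold_right max 0%nat (tl (nn_widths N)).

Definition in_NN (L M l0 lL : nat) (N : network) : Prop :=
  length (nn_widths N) = S (length (nn_layers N)) /\
  (1 <= depth N)%nat /\
  nth 0 (nn_widths N) 0%nat = l0 /\
  last (nn_widths N) 0%nat = lL /\
  (depth N <= L)%nat /\
  (width N <= M)%nat.

Definition weights_bounded (B : R) (N : network) : Prop :=
  forall k, (k < depth N)%nat ->
    let W := fst (nth k (nn_layers N) (fun _ _ => 0, fun _ => 0)) in
    let b := snd (nth k (nn_layers N) (fun _ _ => 0, fun _ => 0)) in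
    forall i, (i < nth (S k) (nn_widths N) 0)%nat ->
      Rabs (b i) <= B /\
      forall j, (j < nth k (nn_widths N) 0)%nat -> Rabs (W i j) <= B.

Definition realize1 (N : network) (x : R) : R :=
  eval_layers (nn_widths N) (nn_layers N) (fun _ => x) 0%nat.

(** ceiling: ceil x = - floor (- x), with Int_part the floor. *)
Definition ceil (x : R) : R := - IZR (Int_part (- x)).

From Stdlib Require Import Reals Lra Lia List Psatz ZArith.
Import ListNotations.
Open Scope R_scope.

(* Yarotsky's sawtooth construction approximates t |-> t^2 on [0, 1] to within
   4^-m by m layers of bounded width and weights, and hence products by
   polarization.  The network clamps u = x / 2^k to [2^-k, 1] and runs the Newton
   iteration y |-> y (2 - c y) for 1/c, c = 2^k u, from y = 2^-k with these
   approximate products; multiplication by 2^k is done by k doubling layers, so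
   no weight exceeds 4.  Each step squares the residual 1 - c y up to the product
   error, so O(k) steps bring it from 1 - 2^-k down to O(2^-k); then the output is
   within O(2^-k) of 1/c, and 1/c is within 2^-k of 1/x (for x > 2^k both lie in
   (0, 2^-k]).  Each step costs O(k) layers, so for 2^-k ~ eps the depth is
   O(log(1/eps)^2), independently of D. *)

(** * Sawtooth approximation of products *)

Lemma relu_id a : 0 <= a -> relu a = a.
Proof. unfold relu, Rmax; destruct (Rle_dec a 0); lra. Qed.

Lemma relu_eq0 a : a <= 0 -> relu a = 0.
Proof. unfold relu, Rmax; destruct (Rle_dec a 0); lra. Qed.

Lemma relu_ge0 a : 0 <= relu a.
Proof. unfold relu, Rmax; destruct (Rle_dec a 0); lra. Qed.

Lemma relu_of_eq a b : a = b -> 0 <= b -> relu a = b.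
Proof. intros ->; apply relu_id. Qed.

Lemma relu_dist_le a z : 0 <= z -> Rabs (relu a - z) <= Rabs (a - z).
Proof.
  unfold relu, Rmax; destruct (Rle_dec a 0); unfold Rabs;
  repeat destruct Rcase_abs; lra.
Qed.

Lemma inv_pow_range b n : 1 <= b -> 0 < / b ^ n <= 1.
Proof.
  intros Hb; assert (1 <= b ^ n) by (apply pow_R1_Rle; lra); split.
  - apply Rinv_0_lt_compat; lra.
  - rewrite <- Rinv_1; apply Rinv_le_contravar; lra.
Qed.

Definition hat (x : R) : R := 2 * x - 4 * relu (x - 1/2).

Definition hat_iter (n : nat) : R -> R := Nat.iter n hat.

(* Yarotsky's approximation t - sum_{s=1}^n hat^s(t) / 4^s of t^2. *)
Fixpoint sq_approx (n : nat) (t : R) : R :=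
  match n with
  | O => t
  | S n' => sq_approx n' t - hat_iter (S n') t / 4 ^ S n'
  end.

Lemma hat_iter_S n t : hat_iter (S n) t = hat (hat_iter n t).
Proof. reflexivity. Qed.

Lemma hat_range x : 0 <= x <= 1 -> 0 <= hat x <= 1.
Proof. unfold hat, relu, Rmax; destruct (Rle_dec (x - 1/2) 0); lra. Qed.

Lemma hat_iter_range n t : 0 <= t <= 1 -> 0 <= hat_iter n t <= 1.
Proof. intros Ht; induction n; [exact Ht | apply hat_range, IHn]. Qed.

Lemma sq_hat x : 0 <= x <= 1 -> x ^ 2 = x - hat x / 2 + hat x ^ 2 / 4.
Proof. unfold hat, relu, Rmax; destruct (Rle_dec (x - 1/2) 0); nra. Qed.

Lemma sq_approx_S n t :
  sq_approx (S n) t = t - hat t / 2 + sq_approx n (hat t) / 4.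
Proof.
  induction n as [|n IHn].
  - simpl; field.
  - change (sq_approx (S (S n)) t)
      with (sq_approx (S n) t - hat_iter (S (S n)) t / 4 ^ S (S n)).
    rewrite IHn; cbn [sq_approx].
    unfold hat_iter; rewrite (Nat.iter_succ_r (S n)).
    simpl; field; apply pow_nonzero; lra.
Qed.

Lemma sq_approx_err n t : 0 <= t <= 1 -> 0 <= sq_approx n t - t ^ 2 <= / (4 * 4 ^ n).
Proof.
  revert t; induction n as [|n IHn]; intros t Ht.
  - simpl; replace (/ (4 * 1)) with (1 / 4) by field.
    assert (0 <= (t - 1/2) ^ 2) by apply pow2_ge_0; nra.
  - rewrite sq_approx_S, (sq_hat t Ht).
    destruct (IHn (hat t) (hat_range t Ht)) as [H0 H1].
    replace (t - hat t / 2 + sq_approx n (hat t) / 4 - (t - hat t / 2 + hat t ^ 2 / 4))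
      with ((sq_approx n (hat t) - hat t ^ 2) / 4) by field.
    replace (/ (4 * 4 ^ S n)) with (/ (4 * 4 ^ n) / 4)
      by (simpl; field; apply pow_nonzero; lra).
    lra.
Qed.

Lemma sq_approx_ge0 n t : 0 <= t <= 1 -> 0 <= sq_approx n t.
Proof. intros Ht; destruct (sq_approx_err n t Ht); nra. Qed.

(* Polarization: ab/2 = ((a+b)/2)^2 - (a/2)^2 - (b/2)^2. *)
Definition mul_approx (m : nat) (a b : R) : R :=
  2 * (sq_approx m ((a + b) / 2) - sq_approx m (a / 2) - sq_approx m (b / 2)).

Lemma mul_approx_err m a b : 0 <= a <= 1 -> 0 <= b <= 1 ->
  Rabs (mul_approx m a b - a * b) <= / 4 ^ m.
Proof.
  intros Ha Hb; unfold mul_approx.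
  destruct (sq_approx_err m ((a + b) / 2)) as [H1 H2]; [lra|].
  destruct (sq_approx_err m (a / 2)) as [H3 H4]; [lra|].
  destruct (sq_approx_err m (b / 2)) as [H5 H6]; [lra|].
  rewrite Rinv_mult in *.
  assert (0 < / 4 ^ m) by (apply Rinv_0_lt_compat, pow_lt; lra).
  apply Rabs_le; split; nra.
Qed.

(** * Networks as compositions of layers *)

(* Each hidden layer is paired with its input width and followed by a ReLU. *)
Fixpoint run_hidden (hs : list (nat * layer)) (x : nat -> R) : nat -> R :=
  match hs with
  | [] => x
  | (w, (W, b)) :: hs' => run_hidden hs' (fun i => relu (affine w W b x i))
  end.

Lemma run_hidden_app hs1 hs2 x :
  run_hidden (hs1 ++ hs2) x = run_hidden hs2 (run_hidden hs1 x).
Proof. revert x; induction hs1 as [|[w [W b]] hs1 IH]; intros x; simpl; auto. Qed.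

Lemma eval_layers_hidden hs wo lo x :
  eval_layers (map fst hs ++ [wo; 1%nat]) (map snd hs ++ [lo]) x
  = affine wo (fst lo) (snd lo) (run_hidden hs x).
Proof.
  revert x; induction hs as [|[w [W b]] hs IH]; intros x; [destruct lo; reflexivity|].
  simpl; rewrite <- IH.
  destruct (map snd hs ++ [lo]) eqn:E; [destruct hs; discriminate | reflexivity].
Qed.

Lemma affine_ext w W b f h i : (forall j, (j < w)%nat -> f j = h j) ->
  affine w W b f i = affine w W b h i.
Proof.
  intros H; unfold affine; f_equal; f_equal.
  apply map_ext_in; intros j Hj; apply in_seq in Hj; rewrite H by lia; reflexivity.
Qed.

Definition vec (l : list R) : nat -> R := fun i => nth i l 0.

Definition layer_of_rows (rows : list (list R * R)) : layer :=
  (fun i j => nth j (fst (nth i rows ([], 0))) 0, fun i => snd (nth i rows ([], 0))).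

Section Transforms.

Variable n : nat.

Definition agree_on (f h : nat -> R) : Prop := forall i, (i < n)%nat -> f i = h i.

Definition transforms (hs : list (nat * layer)) (l l' : list R) : Prop :=
  forall f, agree_on f (vec l) -> agree_on (run_hidden hs f) (vec l').

Lemma transforms_nil l : transforms [] l l.
Proof. intros f Hf; exact Hf. Qed.

Lemma transforms_app hs1 hs2 l1 l2 l3 :
  transforms hs1 l1 l2 -> transforms hs2 l2 l3 -> transforms (hs1 ++ hs2) l1 l3.
Proof. intros H1 H2 f Hf; rewrite run_hidden_app; apply H2, H1, Hf. Qed.

Lemma transforms_cons h hs l1 l2 l3 :
  transforms [h] l1 l2 -> transforms hs l2 l3 -> transforms (h :: hs) l1 l3.
Proof. apply (transforms_app [h]). Qed.

Lemma transforms_layer w rows l l' : (w <= n)%nat ->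
  (forall i, (i < n)%nat ->
     relu (affine w (fst (layer_of_rows rows)) (snd (layer_of_rows rows)) (vec l) i)
     = nth i l' 0) ->
  transforms [(w, layer_of_rows rows)] l l'.
Proof.
  intros Hw H f Hf i Hi; simpl; unfold vec; rewrite <- (H i Hi).
  f_equal; apply affine_ext; intros j Hj; apply Hf; lia.
Qed.

End Transforms.

(** * The Newton network *)

(* A neuron either computes its target exactly (which is then shown to be
   nonnegative), or its target is itself a ReLU of the same argument. *)
Ltac check_neuron :=
  first
  [ apply relu_of_eq;
    [ cbn [sq_approx]; rewrite ?hat_iter_S; unfold hat, mul_approx;
      field; try (apply pow_nonzero; lra)
    | first [assumption | lra | apply relu_ge0] ]
  | f_equal; rewrite ?hat_iter_S; unfold hat, mul_approx;
    field; try (apply pow_nonzero; lra) ].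

Ltac check_neurons :=
  intros i Hi; unfold affine;
  do 12 (destruct i as [|i];
         [ cbn [seq map fold_right nth fst snd layer_of_rows vec repeat app];
           check_neuron | ]);
  lia.

(* Level s of the sawtooth recursion for t: what a layer needs to compute level s + 1. *)
Definition sq_unit (s : nat) (t : R) : list R :=
  [hat_iter s t; relu (hat_iter s t - 1/2); sq_approx s t].

Definition mul_state (s : nat) (u y w t1 t2 t3 : R) : list R :=
  [u; y; w] ++ sq_unit s t1 ++ sq_unit s t2 ++ sq_unit s t3.

Definition copy3_rows : list (list R * R) := [([1], 0); ([0; 1], 0); ([0; 0; 1], 0)].

Definition sawtooth_rows (p : nat) (c : R) : list (list R * R) :=
  [(repeat 0 p ++ [2; -4], 0); (repeat 0 p ++ [2; -4], -(1/2));
   (repeat 0 p ++ [-2 * c; 4 * c; 1], 0)].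

Definition sawtooth_layer (s : nat) : layer :=
  layer_of_rows (copy3_rows ++ sawtooth_rows 3 (/ 4 ^ S s) ++
    sawtooth_rows 6 (/ 4 ^ S s) ++ sawtooth_rows 9 (/ 4 ^ S s)).

Fixpoint sawtooth_stack (s n : nat) : list (nat * layer) :=
  match n with
  | O => []
  | S n' => (12%nat, sawtooth_layer s) :: sawtooth_stack (S s) n'
  end.

Lemma sawtooth_layer_spec s u y w t1 t2 t3 :
  0 <= u -> 0 <= y -> 0 <= w -> 0 <= t1 <= 1 -> 0 <= t2 <= 1 -> 0 <= t3 <= 1 ->
  transforms 12 [(12%nat, sawtooth_layer s)]
    (mul_state s u y w t1 t2 t3) (mul_state (S s) u y w t1 t2 t3).
Proof.
  intros Hu Hy Hw H1 H2 H3.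
  pose proof (hat_iter_range (S s) t1 H1); pose proof (sq_approx_ge0 (S s) t1 H1).
  pose proof (hat_iter_range (S s) t2 H2); pose proof (sq_approx_ge0 (S s) t2 H2).
  pose proof (hat_iter_range (S s) t3 H3); pose proof (sq_approx_ge0 (S s) t3 H3).
  apply transforms_layer; [lia|].
  unfold sawtooth_layer, copy3_rows, sawtooth_rows, mul_state, sq_unit; check_neurons.
Qed.

Lemma sawtooth_stack_spec n s u y w t1 t2 t3 :
  0 <= u -> 0 <= y -> 0 <= w -> 0 <= t1 <= 1 -> 0 <= t2 <= 1 -> 0 <= t3 <= 1 ->
  transforms 12 (sawtooth_stack s n)
    (mul_state s u y w t1 t2 t3) (mul_state (s + n) u y w t1 t2 t3).
Proof.
  intros; revert s; induction n as [|n IHn]; intros s.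
  - rewrite Nat.add_0_r; apply transforms_nil.
  - apply transforms_cons with (mul_state (S s) u y w t1 t2 t3).
    + apply sawtooth_layer_spec; assumption.
    + replace (s + S n)%nat with (S s + n)%nat by lia; apply IHn.
Qed.

Definition regs (a b c : R) : list R := [a; b; c; 0; 0; 0; 0; 0; 0; 0; 0; 0].

Lemma mul_state_0 u y w t1 t2 t3 : mul_state 0 u y w t1 t2 t3 =
  [u; y; w; t1; relu (t1 - 1/2); t1; t2; relu (t2 - 1/2); t2;
   t3; relu (t3 - 1/2); t3].
Proof. reflexivity. Qed.

Definition load_rows (cs : list R) : list (list R * R) :=
  [(cs, 0); (cs, -(1/2)); (cs, 0)].

Definition load_uy_layer : layer :=
  layer_of_rows ([([1], 0); ([0; 1], 0); ([], 0)] ++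
    load_rows [1/2; 1/2] ++ load_rows [1/2] ++ load_rows [0; 1/2]).

Definition load_yw_layer : layer :=
  layer_of_rows (copy3_rows ++
    load_rows [0; 1/2; 1/2] ++ load_rows [0; 1/2] ++ load_rows [0; 0; 1/2]).

(* Neurons 5, 8 and 11 hold the three values of sq_approx. *)
Definition read_product_layer : layer :=
  layer_of_rows [([1], 0); ([0; 1], 0); ([0; 0; 0; 0; 0; 2; 0; 0; -2; 0; 0; -2], 0)].

Definition read_double_product_layer : layer :=
  layer_of_rows [([1], 0); ([0; 0; 0; 0; 0; 4; 0; 0; -4; 0; 0; -4], 0);
                 ([0; 0; 0; 0; 0; 4; 0; 0; -4; 0; 0; -4], -1)].

Definition double_layer : layer := layer_of_rows [([1], 0); ([0; 1], 0); ([0; 0; 2], 0)].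

Definition one_minus_half_layer : layer :=
  layer_of_rows [([1], 0); ([0; 1], 0); ([0; 0; -(1/2)], 1)].

Definition clamp_layer : layer := layer_of_rows [([1], 0); ([0; 1; -1], 0)].

Lemma load_uy_layer_spec u y : 0 <= u <= 1 -> 0 <= y <= 1 ->
  transforms 12 [(12%nat, load_uy_layer)]
    (regs u y 0) (mul_state 0 u y 0 ((u + y) / 2) (u / 2) (y / 2)).
Proof.
  intros; rewrite mul_state_0; apply transforms_layer; [lia|].
  unfold load_uy_layer, load_rows, regs; check_neurons.
Qed.

Lemma load_yw_layer_spec u y w : 0 <= u <= 1 -> 0 <= y <= 1 -> 0 <= w <= 1 ->
  transforms 12 [(12%nat, load_yw_layer)]
    (regs u y w) (mul_state 0 u y w ((y + w) / 2) (y / 2) (w / 2)).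
Proof.
  intros; rewrite mul_state_0; apply transforms_layer; [lia|].
  unfold load_yw_layer, copy3_rows, load_rows, regs; check_neurons.
Qed.

Lemma read_product_layer_spec m u y a b : 0 <= u -> 0 <= y ->
  transforms 12 [(12%nat, read_product_layer)]
    (mul_state m u y 0 ((a + b) / 2) (a / 2) (b / 2))
    (regs u y (relu (mul_approx m a b))).
Proof.
  intros; apply transforms_layer; [lia|].
  unfold read_product_layer, mul_state, sq_unit, regs; check_neurons.
Qed.

Lemma read_double_product_layer_spec m u y w a b : 0 <= u ->
  transforms 12 [(12%nat, read_double_product_layer)]
    (mul_state m u y w ((a + b) / 2) (a / 2) (b / 2))
    (regs u (relu (2 * mul_approx m a b)) (relu (2 * mul_approx m a b - 1))).
Proof.
  intros; apply transforms_layer; [lia|].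
  unfold read_double_product_layer, mul_state, sq_unit, regs; check_neurons.
Qed.

Lemma double_layers_spec n u y v : 0 <= u -> 0 <= y -> 0 <= v ->
  transforms 12 (repeat (12%nat, double_layer) n) (regs u y v) (regs u y (2 ^ n * v)).
Proof.
  intros Hu Hy; revert v; induction n as [|n IHn]; intros v Hv.
  - rewrite Rmult_1_l; apply transforms_nil.
  - apply transforms_cons with (regs u y (2 * v)).
    + apply transforms_layer; [lia|].
      unfold double_layer, regs; check_neurons.
    + replace (2 ^ S n * v) with (2 ^ n * (2 * v)) by (simpl; ring); apply IHn; lra.
Qed.

Lemma one_minus_half_layer_spec u y v : 0 <= u -> 0 <= y ->
  transforms 12 [(12%nat, one_minus_half_layer)] (regs u y v) (regs u y (relu (1 - v / 2))).
Proof.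
  intros; apply transforms_layer; [lia|].
  unfold one_minus_half_layer, regs; check_neurons.
Qed.

Lemma clamp_layer_spec u a b : 0 <= u ->
  transforms 12 [(12%nat, clamp_layer)] (regs u a b) (regs u (relu (a - b)) 0).
Proof.
  intros; apply transforms_layer; [lia|].
  unfold clamp_layer, regs; check_neurons.
Qed.

Definition clamp01 (q : R) : R := relu (relu q - relu (q - 1)).

Lemma clamp01_range q : 0 <= clamp01 q <= 1.
Proof.
  unfold clamp01, relu, Rmax.
  destruct (Rle_dec q 0), (Rle_dec (q - 1) 0), (Rle_dec _ 0); lra.
Qed.

(* With c = 2^k u, newton_half approximates 1 - c y / 2 and newton_step the
   Newton step y (2 - c y) for 1/c; the factor 2^k is applied by k doubling
   layers rather than by a large weight. *)
Definition newton_half m k u y : R := relu (1 - 2 ^ k * relu (mul_approx m u y) / 2).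

Definition newton_step m k u y : R := clamp01 (2 * mul_approx m y (newton_half m k u y)).

Lemma newton_half_range m k u y : 0 <= newton_half m k u y <= 1.
Proof.
  unfold newton_half; split; [apply relu_ge0|].
  assert (0 <= 2 ^ k * relu (mul_approx m u y))
    by (apply Rmult_le_pos; [apply pow_le; lra | apply relu_ge0]).
  unfold relu at 1, Rmax; destruct (Rle_dec _ 0); lra.
Qed.

Definition newton_half_block (m k : nat) : list (nat * layer) :=
  [(12%nat, load_uy_layer)] ++ sawtooth_stack 0 m ++ [(12%nat, read_product_layer)] ++
  repeat (12%nat, double_layer) k ++ [(12%nat, one_minus_half_layer)].

Definition newton_update_block (m : nat) : list (nat * layer) :=
  [(12%nat, load_yw_layer)] ++ sawtooth_stack 0 m ++
  [(12%nat, read_double_product_layer); (12%nat, clamp_layer)].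

Definition newton_block (m k : nat) : list (nat * layer) :=
  newton_half_block m k ++ newton_update_block m.

Lemma newton_half_block_spec m k u y : 0 <= u <= 1 -> 0 <= y <= 1 ->
  transforms 12 (newton_half_block m k) (regs u y 0) (regs u y (newton_half m k u y)).
Proof.
  intros Hu Hy.
  eapply transforms_app; [apply load_uy_layer_spec; assumption|].
  eapply transforms_app; [apply sawtooth_stack_spec; lra|].
  eapply transforms_app; [apply read_product_layer_spec; lra|].
  eapply transforms_app; [apply double_layers_spec; try lra; apply relu_ge0|].
  apply one_minus_half_layer_spec; lra.
Qed.

Lemma newton_update_block_spec m u y w : 0 <= u <= 1 -> 0 <= y <= 1 -> 0 <= w <= 1 ->
  transforms 12 (newton_update_block m) (regs u y w)
    (regs u (clamp01 (2 * mul_approx m y w)) 0).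
Proof.
  intros Hu Hy Hw.
  eapply transforms_app; [apply load_yw_layer_spec; assumption|].
  eapply transforms_app; [apply sawtooth_stack_spec; lra|].
  eapply transforms_cons; [apply read_double_product_layer_spec; lra|].
  apply clamp_layer_spec; lra.
Qed.

Lemma newton_block_spec m k u y : 0 <= u <= 1 -> 0 <= y <= 1 ->
  transforms 12 (newton_block m k) (regs u y 0) (regs u (newton_step m k u y) 0).
Proof.
  intros Hu Hy; eapply transforms_app.
  - apply newton_half_block_spec; assumption.
  - apply newton_update_block_spec; [assumption | assumption | apply newton_half_range].
Qed.

Lemma newton_blocks_spec K m k u y : 0 <= u <= 1 -> 0 <= y <= 1 ->
  transforms 12 (concat (repeat (newton_block m k) K))
    (regs u y 0) (regs u (Nat.iter K (newton_step m k u) y) 0).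
Proof.
  intros Hu; revert y; induction K as [|K IHK]; intros y Hy; [apply transforms_nil|].
  eapply transforms_app; [apply newton_block_spec; assumption|].
  rewrite Nat.iter_succ_r; apply IHK, clamp01_range.
Qed.

Definition input_layer (k : nat) : layer := layer_of_rows [([/ 2 ^ k], 0); ([/ 2 ^ k], -1)].

Definition init_layer (k : nat) : layer := layer_of_rows [([1; -1], 0); ([], / 2 ^ k)].

Definition output_layer : layer := layer_of_rows [([0; 1], 0)].

Definition newton_hidden (m k K : nat) : list (nat * layer) :=
  [(1%nat, input_layer k); (12%nat, init_layer k)] ++ concat (repeat (newton_block m k) K).

Definition newton_net (m k K : nat) : network :=
  mkNet (map fst (newton_hidden m k K) ++ [12%nat; 1%nat])
        (map snd (newton_hidden m k K) ++ [output_layer]).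

Lemma newton_hidden_spec m k K x :
  transforms 12 (newton_hidden m k K) (repeat x 12)
    (regs (clamp01 (x / 2 ^ k))
          (Nat.iter K (newton_step m k (clamp01 (x / 2 ^ k))) (/ 2 ^ k)) 0).
Proof.
  pose proof (inv_pow_range 2 k ltac:(lra)) as Hk.
  apply transforms_cons with (regs (relu (x / 2 ^ k)) (relu (x / 2 ^ k - 1)) 0).
  { apply transforms_layer; [lia|]; unfold input_layer, regs; check_neurons. }
  apply transforms_cons with (regs (clamp01 (x / 2 ^ k)) (/ 2 ^ k) 0).
  { apply transforms_layer; [lia|]; unfold init_layer, regs, clamp01; check_neurons. }
  apply newton_blocks_spec; [apply clamp01_range | lra].
Qed.

Lemma realize_newton_net m k K x :
  realize1 (newton_net m k K) x
  = Nat.iter K (newton_step m k (clamp01 (x / 2 ^ k))) (/ 2 ^ k).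
Proof.
  unfold realize1, newton_net; cbn [nn_widths nn_layers].
  rewrite eval_layers_hidden.
  erewrite affine_ext.
  2: { apply (newton_hidden_spec m k K x).
       intros i Hi; do 12 (destruct i as [|i]; [reflexivity|]); lia. }
  unfold affine, output_layer; cbn -[newton_step clamp01 Nat.iter]; ring.
Qed.

(** * Size and weights *)

Lemma Forall_repeat {X} (P : X -> Prop) x n : P x -> Forall P (repeat x n).
Proof. intros Hx; apply Forall_forall; intros y Hy; apply repeat_spec in Hy; subst; exact Hx. Qed.

Lemma Forall_concat_repeat {X} (P : X -> Prop) l n :
  Forall P l -> Forall P (concat (repeat l n)).
Proof. intros Hl; apply Forall_concat, Forall_repeat, Hl. Qed.

Lemma length_concat_repeat {X} (l : list X) n :
  length (concat (repeat l n)) = (n * length l)%nat.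
Proof. induction n as [|n IHn]; simpl; [reflexivity|]; rewrite length_app, IHn; reflexivity. Qed.

Lemma sawtooth_stack_length s n : length (sawtooth_stack s n) = n.
Proof. revert s; induction n as [|n IHn]; intros s; simpl; auto. Qed.

Lemma newton_block_length m k : length (newton_block m k) = (2 * m + k + 6)%nat.
Proof.
  unfold newton_block, newton_half_block, newton_update_block.
  rewrite !length_app, !sawtooth_stack_length, repeat_length; simpl; lia.
Qed.

Lemma depth_newton_net m k K : depth (newton_net m k K) = (3 + K * (2 * m + k + 6))%nat.
Proof.
  unfold depth, newton_net, newton_hidden; cbn [nn_layers].
  rewrite length_app, length_map, length_app, length_concat_repeat, newton_block_length.
  simpl; lia.
Qed.

Definition layer_bounded (B : R) (L : layer) : Prop :=
  forall i j, Rabs (fst L i j) <= B /\ Rabs (snd L i) <= B.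

Definition rows_bounded (B : R) (rows : list (list R * R)) : Prop :=
  Forall (fun r => Forall (fun c => Rabs c <= B) (fst r) /\ Rabs (snd r) <= B) rows.

Lemma layer_of_rows_bounded B rows : 0 <= B -> rows_bounded B rows ->
  layer_bounded B (layer_of_rows rows).
Proof.
  intros HB H i j; unfold layer_of_rows; cbn [fst snd].
  assert (Hrow : Forall (fun c => Rabs c <= B) (fst (nth i rows ([], 0)))
                 /\ Rabs (snd (nth i rows ([], 0))) <= B).
  { destruct (Nat.lt_ge_cases i (length rows)) as [Hi|Hi].
    - exact (proj1 (Forall_forall _ _) H _ (nth_In _ _ Hi)).
    - rewrite nth_overflow by exact Hi; cbn; rewrite Rabs_R0; auto. }
  destruct Hrow as [Hcs Hb]; split; [|exact Hb].
  destruct (Nat.lt_ge_cases j (length (fst (nth i rows ([], 0))))) as [Hj|Hj].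
  - exact (proj1 (Forall_forall _ _) Hcs _ (nth_In _ _ Hj)).
  - rewrite nth_overflow by exact Hj; rewrite Rabs_R0; exact HB.
Qed.

Ltac rows_bounded_tac :=
  apply layer_of_rows_bounded; [lra|];
  unfold rows_bounded; cbn [copy3_rows sawtooth_rows load_rows repeat app];
  repeat first [ apply Forall_nil | apply Forall_cons | split ];
  cbn [fst snd]; apply Rabs_le; split; lra.

Definition bounded_hidden (h : nat * layer) : Prop :=
  fst h = 12%nat /\ layer_bounded 4 (snd h).

Lemma sawtooth_stack_bounded s n : Forall bounded_hidden (sawtooth_stack s n).
Proof.
  revert s; induction n as [|n IHn]; intros s; constructor; [|apply IHn].
  split; [reflexivity|].
  pose proof (inv_pow_range 4 (S s) ltac:(lra)).
  unfold sawtooth_layer; rows_bounded_tac.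
Qed.

Lemma newton_block_bounded m k : Forall bounded_hidden (newton_block m k).
Proof.
  unfold newton_block, newton_half_block, newton_update_block.
  repeat first [ apply Forall_app; split | apply Forall_cons | apply Forall_nil
               | apply sawtooth_stack_bounded | apply Forall_repeat ];
  (split; [reflexivity|]).
  - unfold load_uy_layer; rows_bounded_tac.
  - unfold read_product_layer; rows_bounded_tac.
  - unfold double_layer; rows_bounded_tac.
  - unfold one_minus_half_layer; rows_bounded_tac.
  - unfold load_yw_layer; rows_bounded_tac.
  - unfold read_double_product_layer; rows_bounded_tac.
  - unfold clamp_layer; rows_bounded_tac.
Qed.

Lemma weights_bounded_of_layers B N :
  Forall (layer_bounded B) (nn_layers N) -> weights_bounded B N.
Proof.
  intros H k Hk; cbv zeta; intros i _; split.
  - apply (proj1 (Forall_forall _ _) H _ (nth_In _ _ Hk) i 0%nat).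
  - intros j _; apply (proj1 (Forall_forall _ _) H _ (nth_In _ _ Hk) i j).
Qed.

Lemma newton_net_in_NN m k K : in_NN (3 + K * (2 * m + k + 6)) 13 1 1 (newton_net m k K).
Proof.
  pose proof (newton_block_bounded m k) as Hb.
  unfold in_NN; rewrite depth_newton_net.
  unfold newton_net, newton_hidden, width; cbn [nn_widths nn_layers map app fst tl nth].
  repeat split; try lia.
  - cbn [length]; rewrite !length_app, !length_map; simpl; lia.
  - rewrite 2!app_comm_cons; change [12%nat; 1%nat] with ([12%nat] ++ [1%nat]).
    rewrite app_assoc; apply last_last.
  - apply (proj2 (list_max_le _ _)); constructor; [lia|].
    apply Forall_app; split; [|repeat constructor].
    apply Forall_map, Forall_concat_repeat.
    eapply Forall_impl; [|exact Hb]; intros h [-> _]; lia.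
Qed.

Lemma newton_net_weights_bounded m k K : weights_bounded 4 (newton_net m k K).
Proof.
  pose proof (inv_pow_range 2 k ltac:(lra)) as Hk.
  apply weights_bounded_of_layers; unfold newton_net, newton_hidden; cbn [nn_layers map app snd].
  constructor; [unfold input_layer; rows_bounded_tac|].
  constructor; [unfold init_layer; rows_bounded_tac|].
  apply Forall_app; split.
  - apply Forall_map, Forall_concat_repeat.
    eapply Forall_impl; [|apply newton_block_bounded]; intros h [_ H]; exact H.
  - constructor; [unfold output_layer; rows_bounded_tac | constructor].
Qed.

(** * Error analysis *)

Section ResidualIteration.

Variables (f : R -> R) (c rho : R).

Hypothesis f_residual : forall y, 0 <= y <= 1 -> Rabs (1 - c * y) <= 1 ->
  0 <= f y <= 1 /\ Rabs (1 - c * f y) <= (1 - c * y) ^ 2 + rho.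

Lemma residual_step y b : 0 <= y <= 1 -> Rabs (1 - c * y) <= b -> b <= 1 ->
  0 <= f y <= 1 /\ Rabs (1 - c * f y) <= b ^ 2 + rho.
Proof.
  intros Hy Hb Hb1; destruct (f_residual y Hy ltac:(lra)) as [Hfy Hres].
  split; [exact Hfy|].
  assert ((1 - c * y) ^ 2 <= b ^ 2); [|lra].
  rewrite <- (pow2_abs (1 - c * y)); apply pow_incr; split; [apply Rabs_pos | exact Hb].
Qed.

Lemma residual_two_steps y d : 0 <= y <= 1 -> Rabs (1 - c * y) <= 1 - d ->
  0 < d <= 1/4 -> 0 <= rho <= d / 8 ->
  0 <= f (f y) <= 1 /\ Rabs (1 - c * f (f y)) <= 1 - 2 * d.
Proof.
  intros Hy Hres Hd Hrho.
  destruct (residual_step y (1 - d) Hy Hres ltac:(lra)) as [H1 H2].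
  assert (Hdd : d * d <= d / 4) by nra.
  assert (H3 : Rabs (1 - c * f y) <= 1 - 13/8 * d) by (cbn [pow] in H2; lra).
  destruct (residual_step (f y) (1 - 13/8 * d) H1 H3 ltac:(lra)) as [H4 H5].
  split; [exact H4 | nra].
Qed.

Lemma residual_doubling y d j : 0 <= y <= 1 -> Rabs (1 - c * y) <= 1 - d ->
  0 < d -> 2 ^ j * d <= 1/2 -> 0 <= rho <= d / 8 ->
  0 <= Nat.iter (2 * j) f y <= 1 /\ Rabs (1 - c * Nat.iter (2 * j) f y) <= 1 - 2 ^ j * d.
Proof.
  intros Hy Hres Hd Hj Hrho; induction j as [|j IHj].
  - simpl; split; [exact Hy | lra].
  - assert (H1 : 1 <= 2 ^ j) by (apply pow_R1_Rle; lra).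
    cbn [pow] in Hj.
    destruct IHj as [H2 H3]; [lra|].
    replace (2 * S j)%nat with (S (S (2 * j))) by lia; rewrite !Nat.iter_succ; cbn [pow].
    replace (1 - 2 * 2 ^ j * d) with (1 - 2 * (2 ^ j * d)) by ring.
    apply residual_two_steps; [exact H2 | exact H3 | split | split]; nra.
Qed.

Lemma residual_quadratic y : 0 <= y <= 1 -> Rabs (1 - c * y) <= 1/2 -> 0 <= rho <= 1/8 ->
  forall i, 0 <= Nat.iter i f y <= 1 /\ Rabs (1 - c * Nat.iter i f y) <= 1/2 /\
            Rabs (1 - c * Nat.iter i f y) <= / 2 ^ i + 2 * rho.
Proof.
  intros Hy Hres Hrho; induction i as [|i [H1 [H2 H3]]].
  - cbn; rewrite Rinv_1; repeat split; lra.
  - set (b := Rmin (1/2) (/ 2 ^ i + 2 * rho)).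
    assert (Hb : Rabs (1 - c * Nat.iter i f y) <= b) by (apply Rmin_glb; assumption).
    assert (Hb1 : b <= 1/2) by apply Rmin_l.
    assert (Hb2 : b <= / 2 ^ i + 2 * rho) by apply Rmin_r.
    pose proof (Rabs_pos (1 - c * Nat.iter i f y)).
    destruct (residual_step _ b H1 Hb ltac:(lra)) as [H4 H5].
    rewrite Nat.iter_succ; cbn [pow]; rewrite Rinv_mult.
    assert (b ^ 2 <= b / 2) by nra.
    repeat split; try apply H4; lra.
Qed.

Lemma residual_iter j i y : 0 <= y <= 1 -> Rabs (1 - c * y) <= 1 - / 2 ^ S j ->
  0 <= rho <= / 2 ^ S j / 8 ->
  Rabs (1 - c * Nat.iter (i + 2 * j) f y) <= / 2 ^ i + 2 * rho.
Proof.
  intros Hy Hres Hrho.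
  pose proof (inv_pow_range 2 (S j) ltac:(lra)) as Hd.
  assert (Hhalf : 2 ^ j * / 2 ^ S j = 1/2) by (cbn [pow]; field; apply pow_nonzero; lra).
  destruct (residual_doubling y (/ 2 ^ S j) j Hy Hres) as [H1 H2]; [lra | lra | lra |].
  rewrite Nat.iter_add; apply residual_quadratic; lra.
Qed.

End ResidualIteration.

Lemma clamp01_dist_le q z : 0 <= z <= 1 -> Rabs (clamp01 q - z) <= Rabs (q - z).
Proof.
  unfold clamp01, relu, Rmax.
  destruct (Rle_dec q 0), (Rle_dec (q - 1) 0), (Rle_dec _ 0); unfold Rabs;
  repeat destruct Rcase_abs; lra.
Qed.

Lemma clamp01_residual c q : 1 <= c -> Rabs (1 - c * clamp01 q) <= Rabs (1 - c * q).
Proof.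
  intros Hc.
  assert (Hz : 0 <= / c <= 1).
  { split; [left; apply Rinv_0_lt_compat; lra|].
    rewrite <- Rinv_1; apply Rinv_le_contravar; lra. }
  assert (Hscale : forall p, Rabs (1 - c * p) = c * Rabs (p - / c)).
  { intros p; replace (1 - c * p) with (- c * (p - / c)) by (field; lra).
    rewrite Rabs_mult, Rabs_Ropp, Rabs_right by lra; reflexivity. }
  rewrite !Hscale; apply Rmult_le_compat_l; [lra|]; apply clamp01_dist_le, Hz.
Qed.

Lemma relu_mul_approx_err m a b : 0 <= a <= 1 -> 0 <= b <= 1 ->
  Rabs (relu (mul_approx m a b) - a * b) <= / 4 ^ m.
Proof.
  intros Ha Hb; eapply Rle_trans; [apply relu_dist_le; nra | apply mul_approx_err; assumption].
Qed.

Lemma newton_half_err m k u y : 0 <= u <= 1 -> 0 <= y <= 1 -> 2 ^ k * u * y <= 2 ->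
  Rabs (newton_half m k u y - (1 - 2 ^ k * u * y / 2)) <= 2 ^ k / 2 * / 4 ^ m.
Proof.
  intros Hu Hy Hc; unfold newton_half.
  assert (HM : 0 <= 2 ^ k / 2) by (pose proof (pow_le 2 k); lra).
  eapply Rle_trans; [apply relu_dist_le; lra|].
  replace (1 - 2 ^ k * relu (mul_approx m u y) / 2 - (1 - 2 ^ k * u * y / 2))
    with (- (2 ^ k / 2) * (relu (mul_approx m u y) - u * y)) by field.
  rewrite Rabs_mult, Rabs_Ropp, Rabs_right by lra.
  apply Rmult_le_compat_l; [exact HM|].
  apply relu_mul_approx_err; assumption.
Qed.

Lemma newton_update_err m k u y : 0 <= u <= 1 -> 0 <= y <= 1 -> 2 ^ k * u * y <= 2 ->
  Rabs (2 * mul_approx m y (newton_half m k u y) - y * (2 - 2 ^ k * u * y))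
  <= (2 + 2 ^ k) * / 4 ^ m.
Proof.
  intros Hu Hy Hc.
  pose proof (newton_half_range m k u y) as Hw.
  pose proof (newton_half_err m k u y Hu Hy Hc) as Hw_err.
  set (w := newton_half m k u y) in *.
  pose proof (mul_approx_err m y w Hy Hw) as Hmul.
  replace (2 * mul_approx m y w - y * (2 - 2 ^ k * u * y))
    with (2 * (mul_approx m y w - y * w) + 2 * y * (w - (1 - 2 ^ k * u * y / 2))) by field.
  eapply Rle_trans; [apply Rabs_triang|].
  rewrite !Rabs_mult, (Rabs_right 2), (Rabs_right y) by lra.
  pose proof (Rabs_pos (w - (1 - 2 ^ k * u * y / 2))).
  nra.
Qed.

(* With exact products the step would give 1 - c y' = (1 - c y)^2. *)
Lemma newton_step_residual m k u y : / 2 ^ k <= u <= 1 -> 0 <= y <= 1 ->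
  Rabs (1 - 2 ^ k * u * y) <= 1 ->
  Rabs (1 - 2 ^ k * u * newton_step m k u y)
  <= (1 - 2 ^ k * u * y) ^ 2 + 2 ^ k * (2 ^ k + 2) * / 4 ^ m.
Proof.
  intros Hu Hy Hres.
  assert (HiM : 0 < / 2 ^ k) by (apply Rinv_0_lt_compat, pow_lt; lra).
  assert (Hcy : 0 <= 2 ^ k * u * y <= 2).
  { pose proof (Rle_abs (1 - 2 ^ k * u * y)); pose proof (Rle_abs (- (1 - 2 ^ k * u * y))).
    rewrite Rabs_Ropp in *; lra. }
  pose proof (newton_update_err m k u y ltac:(lra) Hy ltac:(lra)) as Hq.
  set (M := 2 ^ k) in *; set (d := / 4 ^ m) in *.
  assert (Hd : 0 < d) by (apply Rinv_0_lt_compat, pow_lt; lra).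
  assert (Hc : 1 <= M * u).
  { apply Rmult_le_reg_l with (/ M); [exact HiM|].
    rewrite <- Rmult_assoc, Rinv_l by (apply pow_nonzero; lra); lra. }
  assert (HM : 0 < M) by (apply pow_lt; lra).
  unfold newton_step; set (q := 2 * mul_approx m y (newton_half m k u y)) in *.
  eapply Rle_trans; [apply clamp01_residual; exact Hc|].
  replace (1 - M * u * q) with ((1 - M * u * y) ^ 2 - M * u * (q - y * (2 - M * u * y)))
    by ring.
  eapply Rle_trans; [apply Rabs_triang|].
  rewrite Rabs_Ropp, Rabs_mult, (Rabs_right (M * u)), (Rabs_right (_ ^ 2))
    by (try apply Rle_ge, pow2_ge_0; lra).
  apply Rplus_le_compat_l.
  apply Rle_trans with (M * u * ((2 + M) * d)); [apply Rmult_le_compat_l; lra|].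
  replace (M * (M + 2) * d) with (M * 1 * ((2 + M) * d)) by ring.
  apply Rmult_le_compat_r; [nra | apply Rmult_le_compat_l; lra].
Qed.

Lemma clamp01_id q : 0 <= q <= 1 -> clamp01 q = q.
Proof.
  intros Hq; unfold clamp01.
  rewrite (relu_id q), (relu_eq0 (q - 1)), Rminus_0_r by lra; apply relu_id; lra.
Qed.

Lemma clamp01_one q : 1 <= q -> clamp01 q = 1.
Proof.
  intros Hq; unfold clamp01.
  rewrite (relu_id q), (relu_id (q - 1)) by lra; apply relu_of_eq; lra.
Qed.

(* For x > M the input is clamped to 1, and then both 1/x and the approximated
   1/M lie in (0, 1/M]. *)
Lemma clamp01_scaled M x : 1 <= M -> 1 < x ->
  / M <= clamp01 (x / M) <= 1 /\ Rabs (1 / x - / (M * clamp01 (x / M))) <= / M.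
Proof.
  intros HM Hx.
  assert (HiM : 0 < / M) by (apply Rinv_0_lt_compat; lra).
  destruct (Rle_dec (x / M) 1) as [Hle|Hgt].
  - assert (Hpos : 0 <= x / M) by (unfold Rdiv; apply Rmult_le_pos; lra).
    rewrite clamp01_id by lra.
    replace (/ (M * (x / M))) with (1 / x) by (field; lra).
    rewrite Rminus_diag, Rabs_R0.
    split; [unfold Rdiv; split; nra | lra].
  - apply Rnot_le_lt in Hgt.
    assert (HMx : M < x).
    { apply Rmult_lt_reg_r with (/ M); [exact HiM|].
      rewrite Rinv_r by lra; exact Hgt. }
    assert (Hx' : 0 < / x < / M) by (split; [apply Rinv_0_lt_compat | apply Rinv_lt_contravar]; nra).
    rewrite clamp01_one, Rmult_1_r by lra.
    split; [split; [rewrite <- Rinv_1; apply Rinv_le_contravar|]; lra|].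
    unfold Rdiv; rewrite Rmult_1_l, Rabs_left1; lra.
Qed.

Lemma inv_dist_le_residual c y : 1 <= c -> Rabs (/ c - y) <= Rabs (1 - c * y).
Proof.
  intros Hc.
  replace (/ c - y) with (/ c * (1 - c * y)) by (field; lra).
  rewrite Rabs_mult, Rabs_right by (left; apply Rinv_0_lt_compat; lra).
  rewrite <- (Rmult_1_l (Rabs (1 - c * y))) at 2.
  apply Rmult_le_compat_r; [apply Rabs_pos|].
  rewrite <- Rinv_1; apply Rinv_le_contravar; lra.
Qed.

Lemma product_error_small k : (1 <= k)%nat ->
  0 <= 2 ^ k * (2 ^ k + 2) * / 4 ^ (2 * k + 2) <= / (8 * 2 ^ k).
Proof.
  intros Hk.
  assert (HM : 2 <= 2 ^ k) by (rewrite <- pow_1 at 1; apply Rle_pow; [lra | exact Hk]).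
  assert (H4 : 4 ^ (2 * k + 2) = 16 * (2 ^ k) ^ 4).
  { replace 4 with (2 ^ 2) at 1 by (simpl; ring).
    rewrite <- pow_mult, <- pow_mult; replace (2 * (2 * k + 2))%nat with (k * 4 + 4)%nat by lia.
    rewrite pow_add; simpl; ring. }
  rewrite H4; set (M := 2 ^ k) in *.
  assert (0 < 16 * M ^ 4) by (apply Rmult_lt_0_compat; [lra | apply pow_lt; lra]).
  split.
  - apply Rmult_le_pos; [nra | left; apply Rinv_0_lt_compat; lra].
  - apply Rmult_le_reg_r with (16 * M ^ 4); [lra|].
    rewrite Rmult_assoc, Rinv_l by lra.
    replace (/ (8 * M) * (16 * M ^ 4)) with (2 * M ^ 3) by (field; lra).
    replace (2 * M ^ 3) with (M * (2 * (M * M))) by ring; rewrite Rmult_1_r.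
    apply Rmult_le_compat_l; nra.
Qed.

(* Accuracy 2^-n: k = n + 2 doubling layers, 2k + 2 sawtooth levels, and
   2(n + 1) slow plus k quadratically convergent Newton steps. *)
Definition inv_net (n : nat) : network :=
  newton_net (2 * (n + 2) + 2) (n + 2) (n + 2 + 2 * S n).

Lemma inv_net_error n x : 1 < x -> Rabs (1 / x - realize1 (inv_net n) x) <= / 2 ^ n.
Proof.
  intros Hx; unfold inv_net; rewrite realize_newton_net.
  set (k := (n + 2)%nat); set (M := 2 ^ k).
  assert (HM : 4 <= M).
  { unfold M, k; rewrite pow_add; pose proof (pow_R1_Rle 2 n ltac:(lra)); simpl; lra. }
  destruct (clamp01_scaled M x ltac:(lra) Hx) as [Hu Hout].
  set (u := clamp01 (x / M)) in *; set (c := M * u) in *.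
  assert (Hc : 1 <= c).
  { unfold c; apply Rmult_le_reg_l with (/ M); [apply Rinv_0_lt_compat; lra|].
    rewrite <- Rmult_assoc, Rinv_l by lra; lra. }
  set (rho := M * (M + 2) * / 4 ^ (2 * k + 2)).
  assert (Hrho : 0 <= rho <= / (8 * M)) by (apply product_error_small; unfold k; lia).
  assert (HiM : 0 < / M <= 1 / 4).
  { split; [apply Rinv_0_lt_compat; lra|].
    unfold Rdiv; rewrite Rmult_1_l; apply Rinv_le_contravar; lra. }
  assert (Hres : Rabs (1 - c * Nat.iter (k + 2 * S n) (newton_step (2 * k + 2) k u) (/ M))
                 <= / M + 2 * rho).
  { apply residual_iter.
    - intros y Hy Hy1; split; [apply clamp01_range | apply newton_step_residual; assumption].
    - lra.
    - replace (S (S n)) with k by (unfold k; lia); fold M.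
      replace (c * / M) with u by (unfold c; field; lra).
      rewrite Rabs_right; lra.
    - replace (S (S n)) with k by (unfold k; lia); fold M.
      rewrite Rinv_mult in Hrho; lra. }
  set (y := Nat.iter _ _ (/ M)) in *.
  pose proof (inv_dist_le_residual c y Hc).
  replace (1 / x - y) with ((1 / x - / c) + (/ c - y)) by ring.
  eapply Rle_trans; [apply Rabs_triang|].
  assert (Hn : / M = / 2 ^ n / 4)
    by (unfold M, k; rewrite pow_add; simpl; field; apply pow_nonzero; lra).
  rewrite Rinv_mult in Hrho; lra.
Qed.

Lemma inv_net_in_NN n : in_NN (15 * n * n + 80 * n + 83) 13 1 1 (inv_net n).
Proof.
  replace (15 * n * n + 80 * n + 83)%nat
    with (3 + (n + 2 + 2 * S n) * (2 * (2 * (n + 2) + 2) + (n + 2) + 6))%nat by ring.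
  apply newton_net_in_NN.
Qed.

Lemma inv_net_weights_bounded n : weights_bounded 4 (inv_net n).
Proof. apply newton_net_weights_bounded. Qed.

Lemma exists_nat_between x : 0 <= x -> exists n : nat, x < INR n <= x + 1.
Proof.
  intros Hx; destruct (archimed x) as [Hup Hup1].
  assert (Hz : (0 <= up x)%Z) by (apply le_IZR; lra).
  exists (Z.to_nat (up x)); rewrite INR_IZR_INZ, Z2Nat.id by exact Hz; lra.
Qed.

Lemma inv_pow2_lt eps n : 0 < eps -> 0 <= ln (1 / eps) -> 2 * ln (1 / eps) < INR n ->
  / 2 ^ n < eps.
Proof.
  intros Heps Hl Hn.
  assert (Hinv : 1 / eps < 2 ^ n).
  { apply ln_lt_inv; [apply Rdiv_lt_0_compat; lra | apply pow_lt; lra |].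
    rewrite ln_pow by lra.
    pose proof ln_lt_2; nra. }
  replace eps with (/ (1 / eps)) by (field; lra).
  apply Rinv_lt_contravar; [|exact Hinv].
  apply Rmult_lt_0_compat; [apply Rdiv_lt_0_compat; lra | apply pow_lt; lra].
Qed.

Lemma one_le_ln_inv eps : 0 < eps < 1 / 3 -> 1 <= ln (1 / eps).
Proof.
  intros Heps; rewrite <- (ln_exp 1) at 1; left; apply ln_increasing; [apply exp_pos|].
  pose proof exp_le_3; apply Rle_lt_trans with 3; [lra|].
  apply Rmult_lt_reg_r with eps; [lra|].
  replace (1 / eps * eps) with 1 by (field; lra); lra.
Qed.

Lemma inv_net_depth_bound n l a : 1 <= l -> INR n <= 2 * l + 1 ->
  INR (15 * n * n + 80 * n + 83) <= 500 * l ^ 2 * (a ^ 2 + l ^ 2).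
Proof.
  intros Hl Hn.
  rewrite plus_INR, plus_INR, !mult_INR; replace (INR 15) with 15 by (simpl; ring);
  replace (INR 80) with 80 by (simpl; ring); replace (INR 83) with 83 by (simpl; ring).
  pose proof (pos_INR n).
  assert (0 <= l ^ 2 * a ^ 2) by (apply Rmult_le_pos; apply pow2_ge_0).
  assert (INR n * INR n <= 9 * l ^ 2) by nra.
  assert (1 <= l ^ 2) by nra.
  assert (l <= l ^ 2 * l ^ 2) by nra.
  nra.
Qed.

Theorem lemma3p8 :
  exists C : R, 0 < C /\
  exists B : R, 0 < B /\
  exists eps0 : R, 0 < eps0 < 1 /\
  forall D : R, 1 < D ->
  forall eps : R, 0 < eps < eps0 ->
  exists (phi : network) (L : nat),
    in_NN L 13 1 1 phi /\
    INR L <= C * (ln (1 / eps)) ^ 2 * ((ceil (ln D)) ^ 2 + (ln (1 / eps)) ^ 2) /\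
    (forall x : R, 1 < x < D -> Rabs (1 / x - realize1 phi x) <= eps) /\
    weights_bounded B phi.
Proof.
  exists 500; split; [lra|]; exists 4; split; [lra|]; exists (1 / 3); split; [lra|].
  intros D _ eps Heps.
  assert (Hl : 1 <= ln (1 / eps)) by (apply one_le_ln_inv; lra).
  destruct (exists_nat_between (2 * ln (1 / eps))) as [n [Hn1 Hn2]]; [lra|].
  exists (inv_net n), (15 * n * n + 80 * n + 83)%nat.
  split; [apply inv_net_in_NN|].
  split; [apply inv_net_depth_bound; lra|].
  split; [|apply inv_net_weights_bounded].
  intros x [Hx _]; eapply Rle_trans; [apply inv_net_error, Hx|].
  left; apply inv_pow2_lt; lra.
Qed.
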